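(* Consider the two-sided market model described in the context with $\phi(x)=x^\theta$ for some $0<\theta<1$, and suppose $a>\zeta$, where $$\zeta=\max\Big\{\tfrac{1}{2}\big(\tfrac{\gamma-2}{\gamma-1}\phi'(\bar Yx_0)+\lambda\big)\bar X,\ \tfrac{1}{2}\big(\textstyle\int_{x_0}^{\infty}\phi'(x\bar Y)x^{1-\gamma}dx+\lambda \bar X\big)\Big\}.$$ Let $y^*>y_0$ be the revenue-maximizing CP threshold, i.e. the solution of $g(y^* )=a$, and let $\widehat y>y_0$ be the welfare-maximizing CP threshold, i.e. the solution of $h(\widehat y)=a$. Then $\widehat y<y^*$.
   Context: Model: fix $\gamma>2$, $\beta>2$, $\lambda>0$, $a\ge0$. Consumer types have density $x^{-\gamma}$ on $x\ge x_0:=(\frac{1}{\gamma-1})^{\frac{1}{\gamma-1}}$, CP types density $y^{-\beta}$ on $y\ge y_0:=(\frac{1}{\beta-1})^{\frac{1}{\beta-1}}$. Let $Y(s)=\int_s^\infty y^{1-\beta}dy$, $\bar X=\int_{x_0}^\infty x^{1-\gamma}dx$, $\bar Y=Y(y_0)$. Define for $y\ge y_0$: $g(y)=\frac12\big(\frac{\gamma-2}{\gamma-1}\phi'(x_0\sqrt{\bar Y Y(y)})+\lambda\big)\frac{\bar X\sqrt{\bar Y}}{\sqrt{Y(y)}}$ and $h(y)=\frac12\big(\int_{x_0}^\infty\phi'(x\sqrt{\bar Y Y(y)})x^{1-\gamma}dx+\lambda\bar X\big)\frac{\sqrt{\bar Y}}{\sqrt{Y(y)}}$. Interpretation: with all consumers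 participating and CPs of type $\ge y$ participating, $g(y)=a$ is the first-order condition for the ISP's revenue $\phi(x_0\sqrt{\bar YY(y)})+\lambda\bar X\sqrt{\bar Y Y(y)}-aY(y)$ (membership fee and CP fee set so threshold types are indifferent), and $h(y)=a$ is the first-order condition for the social welfare $\int_{x_0}^\infty\phi(x\sqrt{\bar YY(y)})x^{-\gamma}dx+\lambda\bar X\sqrt{\bar YY(y)}-aY(y)$. Both $g$ and $h$ are increasing in $y$. *)

From Stdlib Require Import Reals.
From Coquelicot Require Import Coquelicot.
Open Scope R_scope.

Definition Iinf (f : R -> R) (s : R) : R :=
  RInt_gen f (at_point s) (Rbar_locally p_infty).

(* lower endpoints of the type distributions *)
Definition x0 (gamma : R) : R := Rpower (1 / (gamma - 1)) (1 / (gamma - 1)).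
Definition y0 (beta : R) : R := Rpower (1 / (beta - 1)) (1 / (beta - 1)).

Definition Yf (beta s : R) : R := Iinf (fun y => Rpower y (1 - beta)) s.
Definition Xbar (gamma : R) : R := Iinf (fun x => Rpower x (1 - gamma)) (x0 gamma).
Definition Ybar (beta : R) : R := Yf beta (y0 beta).

Definition dphi (phi : R -> R) (x : R) : R := Derive phi x.

Definition g_fun (phi : R -> R) (gamma beta lambda y : R) : R :=
  / 2 * ((gamma - 2) / (gamma - 1)
           * dphi phi (x0 gamma * sqrt (Ybar beta * Yf beta y)) + lambda)
      * (Xbar gamma * sqrt (Ybar beta) / sqrt (Yf beta y)).

Definition h_fun (phi : R -> R) (gamma beta lambda y : R) : R :=
  / 2 * (Iinf (fun x => dphi phi (x * sqrt (Ybar beta * Yf beta y))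
                          * Rpower x (1 - gamma)) (x0 gamma)
         + lambda * Xbar gamma)
      * (sqrt (Ybar beta) / sqrt (Yf beta y)).

Definition zeta (phi : R -> R) (gamma beta lambda : R) : R :=
  Rmax (/ 2 * ((gamma - 2) / (gamma - 1) * dphi phi (Ybar beta * x0 gamma) + lambda)
            * Xbar gamma)
       (/ 2 * (Iinf (fun x => dphi phi (x * Ybar beta) * Rpower x (1 - gamma)) (x0 gamma)
               + lambda * Xbar gamma)).

(** With [phi x = x ^ theta] every improper integral in the model has a closed
    form, and both first-order functions take the shape
    [/2 * (c * P y + lambda * Xbar) * K y], where
    [P y = (sqrt (Ybar * Y y)) ^ (theta - 1)] and [K y = sqrt Ybar / sqrt (Y y)]
    are positive and nondecreasing in [y] (since [Y] decreases and [theta < 1]).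
    Only the constant differs: [c = theta x0^(theta+1-gamma) / (gamma-1)] for
    [g] and [c = theta x0^(theta+1-gamma) / (gamma-1-theta)] for [h].  Hence
    [g < h] everywhere and [g] is nondecreasing, so [h yhat = a = g ystar]
    forces [yhat < ystar]. *)

From Stdlib Require Import Reals Lra.
From Coquelicot Require Import Coquelicot.
Open Scope R_scope.

Lemma Rpower_gt0 x c : 0 < Rpower x c.
Proof. apply exp_pos. Qed.

Lemma Rle_Rpower_l_npos a b c : c <= 0 -> 0 < a <= b -> Rpower b c <= Rpower a c.
Proof.
  intros Hc Hab.
  rewrite <- (Ropp_involutive c), (Rpower_Ropp a), (Rpower_Ropp b).
  apply Rinv_le_contravar; [apply Rpower_gt0 |].
  apply Rle_Rpower_l; [lra | exact Hab].
Qed.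

Lemma is_derive_Rpower c x :
  0 < x -> is_derive (fun t => Rpower t c) x (c * Rpower x (c - 1)).
Proof. intro Hx. apply is_derive_Reals, derivable_pt_lim_power, Hx. Qed.

Lemma dphi_Rpower c x : 0 < x -> dphi (fun t => Rpower t c) x = c * Rpower x (c - 1).
Proof. intro Hx. apply is_derive_unique, is_derive_Rpower, Hx. Qed.

Lemma is_lim_Rpower_p_infty c : c < 0 -> is_lim (fun t => Rpower t c) p_infty 0.
Proof.
  intro Hc.
  assert (Hlin : is_lim (fun t => c * ln t) p_infty m_infty).
  { replace m_infty with (Rbar_mult c p_infty).
    - apply is_lim_scal_l, is_lim_ln_p.
    - simpl. destruct (Rle_dec 0 c) as [Hc0 | _]; [exfalso; lra | reflexivity]. }
  apply (is_lim_comp exp (fun t => c * ln t) p_infty 0 m_infty is_lim_exp_m Hlin).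
  exists 0. intros t _. discriminate.
Qed.

Lemma filter_prod_at_point_p_infty s (P : R * R -> Prop) :
  (forall b, s < b -> P (s, b)) -> filter_prod (at_point s) (Rbar_locally p_infty) P.
Proof.
  intro HP. exists (fun a => a = s) (fun b => s < b).
  - reflexivity.
  - exists s. auto.
  - intros a b -> Hb. apply HP, Hb.
Qed.

Lemma is_RInt_gen_ext_gt s (f g : R -> R) l :
  (forall x, s < x -> f x = g x) ->
  is_RInt_gen f (at_point s) (Rbar_locally p_infty) l ->
  is_RInt_gen g (at_point s) (Rbar_locally p_infty) l.
Proof.
  intro Hfg. apply is_RInt_gen_ext, filter_prod_at_point_p_infty.
  intros b Hb x Hx. simpl in Hx. rewrite Rmin_left in Hx by lra.
  apply Hfg. lra.
Qed.

Lemma is_RInt_gen_Rpower s p : 0 < s -> p < -1 ->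
  is_RInt_gen (fun x => Rpower x p) (at_point s) (Rbar_locally p_infty)
    (Rpower s (p + 1) / (- p - 1)).
Proof.
  intros Hs Hp.
  set (F := fun t => / (p + 1) * Rpower t (p + 1)).
  assert (HF : forall x, 0 < x -> is_derive F x (Rpower x p)).
  { intros x Hx. unfold F.
    replace (Rpower x p) with (/ (p + 1) * ((p + 1) * Rpower x (p + 1 - 1)))
      by (replace (p + 1 - 1) with p by ring; field; lra).
    apply is_derive_scal, is_derive_Rpower, Hx. }
  assert (HDF : forall x, 0 < x -> Derive F x = Rpower x p)
    by (intros x Hx; apply is_derive_unique, HF, Hx).
  assert (Hright : forall b x, s < b ->
            Rmin (fst (s, b)) (snd (s, b)) <= x <= Rmax (fst (s, b)) (snd (s, b)) -> 0 < x).
  { intros b x Hb Hx. simpl in Hx. rewrite Rmin_left in Hx by lra. lra. }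
  apply (is_RInt_gen_ext_gt s (Derive F)); [intros x Hx; apply HDF; lra |].
  replace (Rpower s (p + 1) / (- p - 1)) with (0 - F s) by (unfold F; field; lra).
  apply is_RInt_gen_Derive.
  - apply filter_prod_at_point_p_infty. intros b Hb x Hx.
    eexists. apply HF, (Hright b x Hb Hx).
  - apply filter_prod_at_point_p_infty. intros b Hb x Hx.
    specialize (Hright b x Hb Hx).
    apply (continuous_ext_loc _ (fun t => Rpower t p)).
    + exists (mkposreal x Hright). intros t Ht. symmetry. apply HDF.
      apply Rabs_lt_between' in Ht. simpl in Ht. lra.
    + apply (ex_derive_continuous (fun t => Rpower t p)).
      eexists. apply is_derive_Rpower, Hright.
  - intros P HP. apply (locally_singleton _ _ HP).
  - assert (Hlim := is_lim_scal_l _ (/ (p + 1)) _ _ (is_lim_Rpower_p_infty (p + 1) ltac:(lra))).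
    rewrite Rbar_mult_0_r in Hlim. exact Hlim.
Qed.

Lemma Iinf_Rpower s p : 0 < s -> p < -1 ->
  Iinf (fun x => Rpower x p) s = Rpower s (p + 1) / (- p - 1).
Proof. intros Hs Hp. apply is_RInt_gen_unique, is_RInt_gen_Rpower; assumption. Qed.

Lemma Yf_Rpower beta y : 2 < beta -> 0 < y -> Yf beta y = Rpower y (2 - beta) / (beta - 2).
Proof.
  intros Hb Hy. unfold Yf. rewrite Iinf_Rpower by lra.
  replace (1 - beta + 1) with (2 - beta) by ring.
  replace (- (1 - beta) - 1) with (beta - 2) by ring. reflexivity.
Qed.

Lemma Yf_gt0 beta y : 2 < beta -> 0 < y -> 0 < Yf beta y.
Proof.
  intros Hb Hy. rewrite Yf_Rpower by assumption.
  apply Rdiv_lt_0_compat; [apply Rpower_gt0 | lra].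
Qed.

Lemma Yf_le beta y1 y2 : 2 < beta -> 0 < y1 <= y2 -> Yf beta y2 <= Yf beta y1.
Proof.
  intros Hb Hy. rewrite !Yf_Rpower by lra.
  apply Rmult_le_compat_r.
  - apply Rlt_le, Rinv_0_lt_compat. lra.
  - apply Rle_Rpower_l_npos; lra.
Qed.

Lemma Ybar_gt0 beta : 2 < beta -> 0 < Ybar beta.
Proof. intro Hb. unfold Ybar. apply Yf_gt0; [exact Hb | apply Rpower_gt0]. Qed.

Lemma Xbar_Rpower gamma : 2 < gamma -> Xbar gamma = Rpower (x0 gamma) (2 - gamma) / (gamma - 2).
Proof.
  intro Hg. unfold Xbar. rewrite Iinf_Rpower; [| apply Rpower_gt0 | lra].
  replace (1 - gamma + 1) with (2 - gamma) by ring.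
  replace (- (1 - gamma) - 1) with (gamma - 2) by ring. reflexivity.
Qed.

Lemma Xbar_gt0 gamma : 2 < gamma -> 0 < Xbar gamma.
Proof.
  intro Hg. rewrite Xbar_Rpower by assumption.
  apply Rdiv_lt_0_compat; [apply Rpower_gt0 | lra].
Qed.

Lemma Iinf_dphi_Rpower_scaled th p s S : 0 < s -> 0 < S -> th + p < 0 ->
  Iinf (fun x => dphi (fun t => Rpower t th) (x * S) * Rpower x p) s
  = th * Rpower S (th - 1) * (Rpower s (th + p) / (- th - p)).
Proof.
  intros Hs HS Hp. unfold Iinf. apply is_RInt_gen_unique.
  apply (is_RInt_gen_ext_gt s (fun x => scal (th * Rpower S (th - 1)) (Rpower x (th - 1 + p)))).
  - intros x Hx.
    rewrite dphi_Rpower by (apply Rmult_lt_0_compat; lra).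
    rewrite <- Rpower_mult_distr, Rpower_plus by lra.
    change (scal ?k ?l) with (k * l). ring.
  - replace (th + p) with (th - 1 + p + 1) by ring.
    replace (- th - p) with (- (th - 1 + p) - 1) by ring.
    apply (is_RInt_gen_scal (fun x => Rpower x (th - 1 + p))), is_RInt_gen_Rpower; lra.
Qed.

Lemma lt_of_crossing (f g : R -> R) (D : R -> Prop) y1 y2 :
  (forall y, D y -> f y < g y) ->
  (forall u v, D u -> D v -> u <= v -> f u <= f v) ->
  D y1 -> D y2 -> f y1 = g y2 -> y2 < y1.
Proof.
  intros Hfg Hmono Hy1 Hy2 Heq.
  destruct (Rlt_or_le y2 y1) as [Hlt | Hle]; [exact Hlt | exfalso].
  specialize (Hmono y1 y2 Hy1 Hy2 Hle). specialize (Hfg y2 Hy2). lra.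
Qed.

Section PowerUtility.

Variables gamma beta lambda theta : R.
Hypotheses (Hgamma : 2 < gamma) (Hbeta : 2 < beta) (Hlambda : 0 < lambda)
  (Htheta : 0 < theta < 1).

Definition first_order_Rpower (c y : R) : R :=
  / 2 * (c * Rpower (sqrt (Ybar beta * Yf beta y)) (theta - 1) + lambda * Xbar gamma)
      * (sqrt (Ybar beta) / sqrt (Yf beta y)).

Lemma first_order_Rpower_lt c1 c2 y :
  0 < y -> c1 < c2 -> first_order_Rpower c1 y < first_order_Rpower c2 y.
Proof.
  intros Hy Hc. unfold first_order_Rpower.
  apply Rmult_lt_compat_r.
  - apply Rdiv_lt_0_compat; apply sqrt_lt_R0; [apply Ybar_gt0 | apply Yf_gt0]; assumption.
  - apply Rmult_lt_compat_l; [lra |].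
    apply Rplus_lt_compat_r, Rmult_lt_compat_r; [apply Rpower_gt0 | exact Hc].
Qed.

Lemma first_order_Rpower_le c y1 y2 :
  0 <= c -> 0 < y1 <= y2 -> first_order_Rpower c y1 <= first_order_Rpower c y2.
Proof.
  intros Hc Hy. unfold first_order_Rpower.
  assert (HYb := Ybar_gt0 beta Hbeta).
  assert (HY1 := Yf_gt0 beta y1 Hbeta ltac:(lra)).
  assert (HY2 := Yf_gt0 beta y2 Hbeta ltac:(lra)).
  assert (HY := Yf_le beta y1 y2 Hbeta Hy).
  assert (HX := Xbar_gt0 gamma Hgamma).
  apply Rmult_le_compat.
  - assert (0 <= Rpower (sqrt (Ybar beta * Yf beta y1)) (theta - 1))
      by apply Rlt_le, Rpower_gt0.
    assert (0 <= c * Rpower (sqrt (Ybar beta * Yf beta y1)) (theta - 1))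
      by (apply Rmult_le_pos; assumption).
    assert (0 < lambda * Xbar gamma) by (apply Rmult_lt_0_compat; assumption).
    lra.
  - apply Rlt_le, Rdiv_lt_0_compat; apply sqrt_lt_R0; assumption.
  - apply Rmult_le_compat_l; [lra |].
    apply Rplus_le_compat_r, Rmult_le_compat_l; [exact Hc |].
    apply Rle_Rpower_l_npos; [lra |]. split.
    + apply sqrt_lt_R0, Rmult_lt_0_compat; assumption.
    + apply sqrt_le_1_alt, Rmult_le_compat_l; lra.
  - apply Rmult_le_compat_l; [apply sqrt_pos |].
    apply Rinv_le_contravar; [apply sqrt_lt_R0, HY2 | apply sqrt_le_1_alt, HY].
Qed.

Lemma g_fun_Rpower y : 0 < y ->
  g_fun (fun x => Rpower x theta) gamma beta lambda y
  = first_order_Rpower (theta * Rpower (x0 gamma) (theta + 1 - gamma) / (gamma - 1)) y.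
Proof.
  intro Hy. unfold g_fun, first_order_Rpower.
  assert (HY : 0 < sqrt (Yf beta y)) by (apply sqrt_lt_R0, Yf_gt0; assumption).
  assert (HS : 0 < sqrt (Ybar beta * Yf beta y)).
  { apply sqrt_lt_R0, Rmult_lt_0_compat; [apply Ybar_gt0 | apply Yf_gt0]; assumption. }
  rewrite dphi_Rpower by (apply Rmult_lt_0_compat; [apply Rpower_gt0 | exact HS]).
  rewrite <- Rpower_mult_distr by (apply Rpower_gt0 || exact HS).
  (* Unapplied, [Xbar_Rpower] would also match [Ybar beta] (same shape with [x0 := y0]). *)
  rewrite (Xbar_Rpower gamma Hgamma).
  replace (theta + 1 - gamma) with (theta - 1 + (2 - gamma)) by ring.
  rewrite Rpower_plus.
  field. repeat split; lra.
Qed.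

Lemma h_fun_Rpower y : 0 < y ->
  h_fun (fun x => Rpower x theta) gamma beta lambda y
  = first_order_Rpower (theta * Rpower (x0 gamma) (theta + 1 - gamma) / (gamma - 1 - theta)) y.
Proof.
  intro Hy. unfold h_fun, first_order_Rpower.
  assert (HY : 0 < sqrt (Yf beta y)) by (apply sqrt_lt_R0, Yf_gt0; assumption).
  assert (HS : 0 < sqrt (Ybar beta * Yf beta y)).
  { apply sqrt_lt_R0, Rmult_lt_0_compat; [apply Ybar_gt0 | apply Yf_gt0]; assumption. }
  rewrite Iinf_dphi_Rpower_scaled; [| apply Rpower_gt0 | exact HS | lra].
  replace (theta + (1 - gamma)) with (theta + 1 - gamma) by ring.
  replace (- theta - (1 - gamma)) with (gamma - 1 - theta) by ring.
  field. split; lra.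
Qed.

Lemma g_fun_lt_h_fun_Rpower y : 0 < y ->
  g_fun (fun x => Rpower x theta) gamma beta lambda y
  < h_fun (fun x => Rpower x theta) gamma beta lambda y.
Proof.
  intro Hy. rewrite g_fun_Rpower, h_fun_Rpower by exact Hy.
  apply first_order_Rpower_lt; [exact Hy |].
  assert (Hc : 0 < theta * Rpower (x0 gamma) (theta + 1 - gamma))
    by (apply Rmult_lt_0_compat; [lra | apply Rpower_gt0]).
  apply Rmult_lt_compat_l; [exact Hc |].
  apply Rinv_lt_contravar; [apply Rmult_lt_0_compat |]; lra.
Qed.

Lemma g_fun_Rpower_le y1 y2 : 0 < y1 <= y2 ->
  g_fun (fun x => Rpower x theta) gamma beta lambda y1
  <= g_fun (fun x => Rpower x theta) gamma beta lambda y2.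
Proof.
  intro Hy. rewrite !g_fun_Rpower by lra.
  apply first_order_Rpower_le; [| exact Hy].
  apply Rlt_le, Rdiv_lt_0_compat; [| lra].
  apply Rmult_lt_0_compat; [lra | apply Rpower_gt0].
Qed.

End PowerUtility.

Theorem theorem4 (gamma beta lambda a theta ystar yhat : R) :
  2 < gamma -> 2 < beta -> 0 < lambda -> 0 <= a ->
  0 < theta < 1 ->
  let phi := fun x : R => Rpower x theta in
  a > zeta phi gamma beta lambda ->
  y0 beta < ystar -> g_fun phi gamma beta lambda ystar = a ->
  y0 beta < yhat -> h_fun phi gamma beta lambda yhat = a ->
  yhat < ystar.
Proof.
  (* [a > zeta] only guarantees that the thresholds exist. *)
  intros Hgamma Hbeta Hlambda _ Htheta phi _ Hystar Hg Hyhat Hh.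
  assert (Hy0 : 0 < y0 beta) by apply Rpower_gt0.
  apply (lt_of_crossing (g_fun phi gamma beta lambda) (h_fun phi gamma beta lambda)
           (fun y => 0 < y)).
  - intros y Hy. apply g_fun_lt_h_fun_Rpower; assumption.
  - intros u v Hu _ Huv. apply g_fun_Rpower_le; auto.
  - lra.
  - lra.
  - congruence.
Qed.
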